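(* Let $C^{(n)}$ be a CNOT circuit on $n$ qubits which generates, from a starting label sequence $\ell=(\ell_1,\ldots,\ell_n)$, a set $L^{(n)}$ of labels not containing any of the labels $\ell_1,\ldots,\ell_n$ of the starting sequence. Then $\operatorname{size}(C^{(n)})\geq |L^{(n)}|$ and $D(C^{(n)})\geq |L^{(n)}|/(n/2)$.
   Context: $\mathrm{CX}_{i,j}$ ($i\neq j$) is the CNOT gate with control $i$ and target $j$ on qubits $1,\ldots,n$. A CNOT circuit is a finite sequence of moments $1,\ldots,d$, each a set of CNOT gates acting on pairwise disjoint qubits; $D(C)=d$ is its depth and $\operatorname{size}(C)$ its total number of gates. A label is a subset of $\{1,\ldots,n\}$; $ab$ denotes the symmetric difference of labels $a,b$. A label sequence is acted on from the right: $\ell\,\mathrm{CX}_{i,j}$ replaces $\ell_j$ by $\ell_i\ell_j$; a moment applies its gates, a circuit its moments in order. With $C_{1,m}$ the first $m$ moments, $C$ generates $L$ from $\ell$ if every element of $L$ occurs as an entry of $\ell C_{1,m}$ for some $m\in\{1,\ldots,D(C)\}$. *)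

From mathcomp Require Import all_boot all_order all_algebra.
Set Implicit Arguments. Unset Strict Implicit. Unset Printing Implicit Defensive.

(* Qubits are 'I_n (qubit k+1 of the paper is ordinal k). *)
Definition label (n : nat) := {set 'I_n}.
Definition labseq (n : nat) := {ffun 'I_n -> label n}.

(* A CNOT gate CX_{i,j}: (control i, target j), i <> j. *)
Definition gate (n : nat) := ('I_n * 'I_n)%type.
Definition gate_ok n (g : gate n) : bool := g.1 != g.2.
Definition gate_qubits n (g : gate n) : {set 'I_n} := [set g.1; g.2].

Definition moment (n : nat) := seq (gate n).
Definition moment_ok n (m : moment n) : bool :=
  all (@gate_ok n) m && uniq m &&
  pairwise (fun g h => [disjoint gate_qubits g & gate_qubits h]) m.

Definition circuit (n : nat) := seq (moment n).
Definition circuit_ok n (C : circuit n) : bool := all (@moment_ok n) C.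

Definition depth n (C : circuit n) : nat := size C.
Definition csize n (C : circuit n) : nat := sumn (map size C).

Definition symdiff n (a b : label n) : label n := (a :\: b) :|: (b :\: a).
Definition apply_gate n (l : labseq n) (g : gate n) : labseq n :=
  [ffun k => if k == g.2 then symdiff (l g.1) (l g.2) else l k].
(* Gates of a moment act on disjoint qubits, so they commute; apply them in turn. *)
Definition apply_moment n (l : labseq n) (m : moment n) : labseq n :=
  foldl (@apply_gate n) l m.
Definition apply_circuit n (l : labseq n) (C : circuit n) : labseq n :=
  foldl (@apply_moment n) l C.

Definition generates n (C : circuit n) (l : labseq n) (L : {set label n}) : Prop :=
  forall a, a \in L -> exists m k, [/\ 1 <= m, m <= depth C & apply_circuit l (take m C) k = a].

From mathcomp Require Import all_boot all_order all_algebra.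
Set Implicit Arguments. Unset Strict Implicit. Unset Printing Implicit Defensive.
Import GRing.Theory Num.Theory.

(* A CNOT gate rewrites a single entry of the label sequence, so it brings in at
   most one label not present before: a circuit can only reach labels outside
   the starting sequence [l] through at most [size C] "new" labels, and every
   label of [L] is new.  The gates of one moment touch pairwise disjoint pairs
   of qubits, so a moment has at most [n/2] gates and [size C <= D(C) * n/2]. *)

Definition entries n (l : labseq n) : {set label n} := [set l k | k in 'I_n].

Fixpoint new_labels n (l : labseq n) (gs : seq (gate n)) : {set label n} :=
  if gs is g :: gs' then symdiff (l g.1) (l g.2) |: new_labels (apply_gate l g) gs'
  else set0.

Lemma card_new_labels n (l : labseq n) (gs : seq (gate n)) :
  #|new_labels l gs| <= size gs.
Proof.
elim: gs l => [|g gs IH] l /=; first by rewrite cards0.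
by rewrite (leq_trans (leq_card_setU _ _)) // cards1 add1n ltnS.
Qed.

Lemma entries_apply_gate n (l : labseq n) (g : gate n) :
  entries (apply_gate l g) \subset entries l :|: [set symdiff (l g.1) (l g.2)].
Proof.
apply/subsetP => _ /imsetP [k _ ->]; rewrite ffunE.
by case: eqP => _; rewrite in_setU ?set11 ?orbT // imset_f.
Qed.

Lemma entries_apply_gates n (l : labseq n) (gs1 gs2 : seq (gate n)) :
  entries (foldl (@apply_gate n) l gs1) \subset entries l :|: new_labels l (gs1 ++ gs2).
Proof.
elim: gs1 l => [|g gs1 IH] l /=; first exact: subsetUl.
by apply: subset_trans (IH _) _; rewrite setUA setSU // entries_apply_gate.
Qed.

Lemma apply_circuit_flatten n (l : labseq n) (C : circuit n) :
  apply_circuit l C = foldl (@apply_gate n) l (flatten C).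
Proof. by elim: C l => [|m C IH] l //=; rewrite IH foldl_cat. Qed.

Lemma generated_new_labels n (C : circuit n) (l : labseq n) (L : {set label n}) :
  generates C l L -> L \subset entries l :|: new_labels l (flatten C).
Proof.
move=> genL; apply/subsetP => _ /genL [m [k [_ _ <-]]].
have := entries_apply_gates l (flatten (take m C)) (flatten (drop m C)).
rewrite -flatten_cat cat_take_drop -apply_circuit_flatten => /subsetP; apply.
exact: imset_f.
Qed.

Definition moment_qubits n (m : moment n) : {set 'I_n} :=
  \bigcup_(g <- m) gate_qubits g.

Lemma card_moment_qubits n (m : moment n) :
  moment_ok m -> #|moment_qubits m| = 2 * size m.
Proof.
rewrite /moment_ok /moment_qubits; elim: m => [|g m IH] /=; first by rewrite big_nil cards0.
case/and3P=> /and3P [/andP [g_ok gs_ok] _ m_uniq] g_disj m_pairwise.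
have disj : [disjoint gate_qubits g & \bigcup_(h <- m) gate_qubits h].
  rewrite -setI_eq0 big_distrr /= big1_seq // => h /andP [_ hm].
  exact/disjoint_setI0/(allP g_disj).
rewrite big_cons cardsU (disjoint_setI0 disj) cards0 subn0 cards2 -/(gate_ok g) g_ok.
by rewrite IH ?gs_ok ?m_uniq ?m_pairwise // mulnS.
Qed.

Lemma moment_size_bound n (m : moment n) : moment_ok m -> 2 * size m <= n.
Proof.
by move=> m_ok; rewrite -(card_moment_qubits m_ok) -[n in _ <= n]card_ord max_card.
Qed.

Lemma circuit_size_bound n (C : circuit n) : circuit_ok C -> 2 * csize C <= n * depth C.
Proof.
elim: C => [|m C IH] //= /andP [m_ok C_ok].
by rewrite /csize /= mulnDr mulnS leq_add // ?moment_size_bound // IH.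
Qed.

(* For [n = 0] the division by [n / 2] is the junk value [x / 0 = 0]. *)
Lemma ratio_le_depth (R : numFieldType) (a n d : nat) :
  2 * a <= n * d -> (a%:R / (n%:R / 2%:R) <= d%:R :> R)%R.
Proof.
move=> le_2a_nd; have [->|n_gt0] := posnP n; first by rewrite mul0r invr0 mulr0 ler0n.
rewrite ler_pdivrMr ?divr_gt0 ?ltr0n // mulrA ler_pdivlMr ?ltr0n //.
by rewrite -!natrM ler_nat mulnC [(d * n)%N]mulnC.
Qed.

Theorem mainTheorem3 (n : nat) (C : circuit n) (l : labseq n) (L : {set label n}) :
  circuit_ok C ->
  generates C l L ->
  (forall k : 'I_n, l k \notin L) ->
  (#|L| <= csize C)%N /\
  ((#|L|%:R : rat) / (n%:R / 2%:R) <= (depth C)%:R)%R.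
Proof.
move=> C_ok genL L_fresh.
have L_new : L \subset new_labels l (flatten C).
  apply/subsetP => a aL; move: (subsetP (generated_new_labels genL) a aL).
  case/setUP=> // /imsetP [k _ a_lk].
  by move: (L_fresh k); rewrite -a_lk aL.
have L_size : #|L| <= csize C.
  by rewrite /csize -size_flatten (leq_trans (subset_leq_card L_new)) ?card_new_labels.
split=> //; apply: ratio_le_depth.
by rewrite (leq_trans _ (circuit_size_bound C_ok)) // leq_mul2l L_size.
Qed.
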